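(* Let $P$ be a positive basic program and $M$ a weakly well-supported model of $P$, witnessed by a level mapping $\ell$. Then for every atom $a\in M$, $a\in T^{\ell(a)+1}_P(\emptyset,M)$.
   Context: Fix a countable set $\mathcal{A}$ of atoms. A c-atom is $A=(A_d,A_c)$, $A_d\subseteq\mathcal{A}$, $A_c\subseteq 2^{A_d}$; $(\{p\},\{\{p\}\})$ is elementary; $\bot=(\mathcal{A},\emptyset)$. A positive rule is $A\leftarrow A_1,\dots,A_k$, $head(r)=A$, $pos(r)=body(r)=\{A_1,\dots,A_k\}$; a positive basic program is a set of positive rules with heads elementary or $\bot$. $S\models A$ iff $S\cap A_d\in A_c$; $S\models body(r)$ iff all body c-atoms hold; model = satisfies every rule (head holds or body fails). Conditional satisfaction: $S\models_M A$ iff $S\models A$ and every $I$ with $S\cap A_d\subseteq I\subseteq M\cap A_d$ lies in $A_c$. $T_P(S,M)=\{a\mid\exists r\in P,\ head(r)=(\{a\},\{\{a\}\}),\ S\models_M B\ \forall B\in pos(r)\}$, $T^0_P(\emptyset,M)=\emptyset$, $T^{i+1}_P(\emptyset,M)=T_P(T^i_P(\emptyset,M),M)$. For $\ell:M\to\{1,2,\dots\}$: $H(X)=\max\{\ell(a)\mid a\in X\}$ ($\max\emptyset=0$), $L(A,M)=\min\{H(X)\mid X\in A_c,\ X\subseteq M,\ X\models_M A\}$, undefined if the set is empty. A model $M$ of $P$ is weakly well-supported, witnessed by $\ell$, if for each $b\in M$ there is $r\in P$ with $head(r)=(\{b\},\{\{b\}\})$, $M\models body(r)$, and for every $A\in pos(r)$,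 $L(A,M)$ is defined and $\ell(b)>L(A,M)$. *)

From Stdlib Require Import List Arith.
Set Implicit Arguments.

Section Defs.
Variable Atom : Type.

Definition aset := Atom -> Prop.
Definition subset (X Y : aset) : Prop := forall x, X x -> Y x.
Definition inter (X Y : aset) : aset := fun x => X x /\ Y x.

(* A c-atom A = (A_d, A_c), A_d ⊆ atoms, A_c ⊆ 2^{A_d} (see wf_catom). *)
Record catom := CAtom { cdom : aset ; ccomp : aset -> Prop }.

Definition wf_catom (A : catom) : Prop :=
  forall X, ccomp A X -> subset X (cdom A).

Definition elem (p : Atom) : catom :=
  CAtom (fun x => x = p) (fun X => X = (fun x => x = p)).

Definition cbot : catom := CAtom (fun _ => True) (fun _ => False).

(* positive rule  head <- body ;  pos(r) = body(r) *)
Record rule := Rule { head : catom ; body : list catom }.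

Definition program := rule -> Prop.

Definition positive_basic (P : program) : Prop :=
  forall r, P r ->
    ((exists p, head r = elem p) \/ head r = cbot) /\
    (forall B, In B (body r) -> wf_catom B).

Definition sat (S : aset) (A : catom) : Prop := ccomp A (inter S (cdom A)).

Definition sat_body (S : aset) (r : rule) : Prop :=
  forall B, In B (body r) -> sat S B.

Definition is_model (P : program) (M : aset) : Prop :=
  forall r, P r -> sat M (head r) \/ ~ sat_body M r.

Definition csat (M S : aset) (A : catom) : Prop :=
  sat S A /\
  forall I, subset (inter S (cdom A)) I -> subset I (inter M (cdom A)) ->
            ccomp A I.

Definition TP (P : program) (S M : aset) : aset :=
  fun a => exists r, P r /\ head r = elem a /\
                     forall B, In B (body r) -> csat M S B.

Fixpoint TPiter (P : program) (M : aset) (n : nat) : aset :=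
  match n with
  | 0 => fun _ => False
  | S n' => TP P (TPiter P M n') M
  end.

(* H(X) = h : h is the maximum of l over X (0 if X is empty);
   relational, since the max need not exist for infinite X. *)
Definition isH (l : Atom -> nat) (X : aset) (h : nat) : Prop :=
  ((forall x, ~ X x) /\ h = 0) \/
  ((exists x, X x /\ l x = h) /\ forall x, X x -> l x <= h).

Definition Lcand (l : Atom -> nat) (A : catom) (M : aset) (h : nat) : Prop :=
  exists X, ccomp A X /\ subset X M /\ csat M X A /\ isH l X h.

Definition isL (l : Atom -> nat) (A : catom) (M : aset) (v : nat) : Prop :=
  Lcand l A M v /\ forall h, Lcand l A M h -> v <= h.

Definition weakly_well_supported (P : program) (M : aset) (l : Atom -> nat) : Prop :=
  is_model P M /\
  (forall a, M a -> 1 <= l a) /\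
  forall b, M b ->
    exists r, P r /\ head r = elem b /\ sat_body M r /\
      forall A, In A (body r) -> exists v, isL l A M v /\ v < l b.

End Defs.

(* The iterates T_P^n(∅,M) form an increasing chain of subsets
   of M (for a model M), because conditional satisfaction S |=_M A is
   preserved when S grows inside M.  Now argue by strong induction on l(a)
   for a ∈ M.  Weak well-supportedness gives a rule r with head a whose body
   c-atoms A all have a level L(A,M) < l(a), attained by some X ⊆ M with
   X |=_M A and l(x) <= L(A,M) for every x ∈ X.  By induction every such x
   lies in T_P^(l(x)+1) ⊆ T_P^(l(a)), so X ⊆ T_P^(l(a)) and, by upward
   preservation, T_P^(l(a)) |=_M A.  Hence r fires and a ∈ T_P^(l(a)+1). *)

From Stdlib Require Import List Arith Lia.
Set Implicit Arguments.

Section ConditionalSatisfaction.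
Variable Atom : Type.
Variable M : aset Atom.

Lemma csat_upward (X S : aset Atom) (A : catom Atom) :
  csat M X A -> subset X S -> subset S M -> csat M S A.
Proof.
  intros [_ Hint] HXS HSM. split.
  - apply Hint; intros x [Hx Hd]; split; auto.
  - intros I HSI HIM. apply Hint; auto.
    intros x [Hx Hd]. apply HSI. split; auto.
Qed.

Lemma csat_sat (S : aset Atom) (A : catom Atom) :
  csat M S A -> subset S M -> sat M A.
Proof.
  intros [_ Hint] HSM. apply Hint.
  - intros x [Hx Hd]; split; auto.
  - intros x Hx; exact Hx.
Qed.

Lemma sat_elem (a : Atom) : sat M (elem a) -> M a.
Proof.
  unfold sat; simpl; intros Heq.
  assert (Ha : inter M (fun x => x = a) a) by (rewrite Heq; reflexivity).
  apply Ha.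
Qed.

End ConditionalSatisfaction.

Section Iterates.
Variable Atom : Type.
Variable P : program Atom.
Variable M : aset Atom.
Hypothesis model : is_model P M.

Lemma TPiter_sound (n : nat) : subset (TPiter P M n) M.
Proof.
  induction n as [|n IH]; intros a Ha; [destruct Ha|].
  destruct Ha as [r [Pr [Hhead Hbody]]].
  destruct (model Pr) as [Hsat | Hnot].
  - rewrite Hhead in Hsat. exact (sat_elem Hsat).
  - exfalso. apply Hnot. intros B HB.
    exact (csat_sat (Hbody B HB) IH).
Qed.

Lemma TPiter_step (n : nat) : subset (TPiter P M n) (TPiter P M (S n)).
Proof.
  induction n as [|n IH]; intros a Ha; [destruct Ha|].
  destruct Ha as [r [Pr [Hhead Hbody]]].
  exists r. split; [exact Pr | split; [exact Hhead |]].
  intros B HB. exact (csat_upward (Hbody B HB) IH (TPiter_sound (S n))).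
Qed.

Lemma TPiter_mono (n m : nat) : n <= m -> subset (TPiter P M n) (TPiter P M m).
Proof.
  induction 1 as [|m _ IH]; intros x Hx; auto.
  apply TPiter_step, IH, Hx.
Qed.

End Iterates.

Section Levels.
Variable Atom : Type.
Variable l : Atom -> nat.

Lemma isH_bound (X : aset Atom) (h : nat) (x : Atom) :
  isH l X h -> X x -> l x <= h.
Proof.
  intros [[Hempty _] | [_ Hmax]] Hx; [destruct (Hempty x Hx) | auto].
Qed.

Lemma isL_witness (A : catom Atom) (M : aset Atom) (v : nat) :
  isL l A M v ->
  exists X, subset X M /\ csat M X A /\ forall x, X x -> l x <= v.
Proof.
  intros [[X [_ [HXM [Hcsat HH]]]] _].
  exists X. split; [exact HXM | split; [exact Hcsat |]].
  intros x Hx. exact (isH_bound x HH Hx).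
Qed.

End Levels.

Theorem lemma3 (Atom : Type)
  (Hcount : exists f : Atom -> nat, forall x y, f x = f y -> x = y)
  (P : program Atom) (M : aset Atom) (l : Atom -> nat) :
  positive_basic P ->
  weakly_well_supported P M l ->
  forall a, M a -> TPiter P M (S (l a)) a.
Proof.
  intros _ [model [_ support]].
  intros a; remember (l a) as k eqn:Hk; revert a Hk.
  induction k as [k IH] using lt_wf_ind; intros a Hk Ha; subst k.
  destruct (support a Ha) as [r [Pr [Hhead [_ Hlevels]]]].
  exists r. split; [exact Pr | split; [exact Hhead |]].
  intros B HB. destruct (Hlevels B HB) as [v [HL Hv]].
  destruct (isL_witness HL) as [X [HXM [Hcsat Hbound]]].
  assert (HX : subset X (TPiter P M (l a))).
  { intros x Hx. specialize (Hbound x Hx).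
    apply (TPiter_mono model (n := S (l x))); [lia|].
    apply (IH (l x)); auto; lia. }
  exact (csat_upward Hcsat HX (TPiter_sound model (l a))).
Qed.
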